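(* Let the configuration space be $\mathbb{R}^n$ with each coordinate an independent double integrator $\ddot q_i=a_i$, $a_i\in[-1,1]$, and let $q_I,q_G\in\mathcal{C}_{free}$. Any piecewise-linear path $\tau:[0,1]\to\mathcal{C}_{free}$ with $\tau(0)=q_I$, $\tau(1)=q_G$ is converted by the bang-bang transform into an acceleration control $a(\cdot):[0,t_F]\to[-1,1]^n$ whose state trajectory from $x_I=(q_I,\mathbf{0})$ lies in $X_{free}=\{(q,\dot q): q\in\mathcal{C}_{free}\}$ and reaches $x_G=(q_G,\mathbf{0})$ at time $t_F$; i.e., it yields a solution to the rest-to-rest kinodynamic planning problem for the double integrator system.
   Context: $\mathcal{C}_{free}$ is the open set of collision-free configurations. Bang-bang transform: for each edge of $\tau$ from vertex $q$ to the next vertex $q'$, let $v=q'-q$, $\hat v=v/\|v\|$, $s=\max_i|\hat v_i|$, acceleration vector $a=\hat v/s$ and $t=\sqrt{s\|v\|}$; the edge control is apply $a$ for time $t$ then $-a$ for time $t$. The edge controls are concatenated in order along the path. *)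

From HB Require Import structures.
From mathcomp Require Import all_boot all_order all_algebra.
From mathcomp Require Import all_classical all_reals all_analysis.
Set Implicit Arguments. Unset Strict Implicit. Unset Printing Implicit Defensive.
Import Order.TTheory GRing.Theory Num.Theory numFieldNormedType.Exports.
Local Open Scope classical_set_scope.
Local Open Scope ring_scope.

Section BangBang.
Variables (R : realType) (n : nat).

Definition enorm (v : 'rV[R]_n) : R := Num.sqrt (\sum_(i < n) (v 0 i) ^+ 2).

(* A piecewise-constant acceleration control: a sequence of pieces
   (acceleration vector, duration), applied one after the other. *)
Definition control := seq ('rV[R]_n * R).

Definition edge_ctrl (q q' : 'rV[R]_n) : control :=
  let v := q' - q in
  let vh := (enorm v)^-1 *: v in
  let s := \big[Num.max/0]_(i < n) `|vh 0 i| in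
  let a := s^-1 *: vh in
  let t := Num.sqrt (s * enorm v) in
  [:: (a, t); (- a, t)].

(* Bang-bang transform of the piecewise-linear path with vertices q :: qs:
   concatenation of the edge controls in order. *)
Fixpoint bang_bang (q : 'rV[R]_n) (qs : seq 'rV[R]_n) : control :=
  if qs is q' :: qs' then edge_ctrl q q' ++ bang_bang q' qs' else [::].

Definition duration (u : control) : R := \sum_(c <- u) c.2.

(* Value of the control at time t (right-continuous convention;
   0 after the end). *)
Fixpoint ctrl_at (u : control) (t : R) : 'rV[R]_n :=
  if u is (a, d) :: u' then (if t < d then a else ctrl_at u' (t - d))
  else 0.

Fixpoint switch_times (u : control) (t0 : R) : seq R :=
  if u is (_, d) :: u' then (t0 + d) :: switch_times u' (t0 + d) else [::].

Fixpoint segments_in (C : set 'rV[R]_n) (q : 'rV[R]_n) (qs : seq 'rV[R]_n)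
  : Prop :=
  if qs is q' :: qs' then
    (forall l : R, 0 <= l <= 1 -> C ((1 - l) *: q + l *: q')) /\
    segments_in C q' qs'
  else True.

(* (q, p) is the state trajectory (position, velocity) on [0, tF] of the
   double integrator  q'' = u(t)  started at (q0, p0):
   q, p continuous on [0,tF], q' = p on ]0,tF[, and p' = u(t) on ]0,tF[
   except at the (finitely many) switching times of u. *)
Definition DI_trajectory (u : control) (q0 p0 : 'rV[R]_n)
  (q p : R -> 'rV[R]_n) : Prop :=
  let tF := duration u in
  [/\ q 0 = q0 /\ p 0 = p0,
      {within `[0, tF], continuous q},
      {within `[0, tF], continuous p},
      (forall t, 0 < t < tF -> is_derive t 1 q (p t)) &
      (forall t, 0 < t < tF -> t \notin switch_times u 0 ->
         is_derive t 1 p (ctrl_at u t))].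

End BangBang.

From HB Require Import structures.
From mathcomp Require Import all_boot all_order all_algebra.
From mathcomp Require Import all_classical all_reals all_analysis.
From mathcomp Require Import lra.
Import Order.TTheory GRing.Theory Num.Theory numFieldNormedType.Exports.
Local Open Scope classical_set_scope.
Local Open Scope ring_scope.

Set Implicit Arguments.
Unset Strict Implicit.
Unset Printing Implicit Defensive.

(* The state trajectory is given in closed form.  With the ramp
   r_c(t) = max(t - c, 0) and the Heaviside step H_c, an edge with acceleration
   vector a and half-duration T started at time s contributes
     position      (r_s^2 - 2 r_(s+T)^2 + r_(s+2T)^2)/2 * a,
     velocity      (r_s - 2 r_(s+T) + r_(s+2T)) * a,
     acceleration  (H_s - 2 H_(s+T) + H_(s+2T)) * a,
   and the trajectory is the sum of these contributions over the edges.  The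
   position coefficient grows from 0 to T^2 and then stays constant, the
   velocity coefficient vanishes outside [s, s + 2T], and T^2 a = q' - q; hence
   during each edge the configuration moves along the segment [q, q'] and it
   comes to rest exactly at q'.  Finally |a_i| <= 1 because a is the unit
   direction divided by its largest coordinate. *)

Section DeriveScalarTimesVector.
Variables (R : numFieldType) (V : normedModType R).

Lemma is_deriveZl (f : R -> R) (a : V) (x df : R) :
  is_derive x 1 f df -> is_derive x 1 (fun t => f t *: a) (df *: a).
Proof.
move=> [fx <-].
have quot_cvg : (fun h : R => h^-1 *: (((fun t => f t *: a) \o shift x) (h *: 1) - f x *: a))
    @ 0^' --> 'D_1 f x *: a.
  rewrite [X in X @ _](_ : _ = fun h => (h^-1 *: ((f \o shift x) (h *: 1) - f x)) *: a).
    exact: cvgZr_tmp fx.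
  by apply/funext => h /=; rewrite -scalerBl scalerA.
by apply: DeriveDef; [apply/cvg_ex; eexists; exact: quot_cvg | exact: cvg_lim quot_cvg].
Qed.

Lemma is_derive_sq_flat (f : R -> V) (c : R) :
  f c = 0 -> (forall t, `|f t| <= `|t - c| ^+ 2) -> is_derive c 1 f 0.
Proof.
move=> fc0 fle.
have quot_cvg : (fun h : R => h^-1 *: ((f \o shift c) (h *: 1) - f c)) @ 0^' --> (0 : V).
  apply/cvgr0Pnorm_le => e e0; near=> h.
  have h0 : h != 0 by near: h; exact: nbhs_dnbhs_neq.
  rewrite /= fc0 subr0 normrZ normfV ler_pdivrMl ?normr_gt0 //.
  apply: (le_trans (fle _)); rewrite addrK -[h%:A]/(h * 1) mulr1.
  by rewrite expr2 ler_wpM2l //; near: h; exact: dnbhs0_le.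
by apply: DeriveDef; [apply/cvg_ex; eexists; exact: quot_cvg | exact: cvg_lim quot_cvg].
Unshelve. all: by end_near.
Qed.

End DeriveScalarTimesVector.

Section Ramp.
Variable R : realType.
Implicit Types c s t x T : R.

Definition ramp c t := Num.max (t - c) 0.
(* Right-continuous, like [ctrl_at]. *)
Definition heaviside c t : R := if c <= t then 1 else 0.
Definition half_sq_ramp c t := ramp c t ^+ 2 / 2.

Lemma ramp_ge c t : c <= t -> ramp c t = t - c.
Proof. by move=> ct; apply/max_idPl; rewrite subr_ge0. Qed.

Lemma ramp_le c t : t <= c -> ramp c t = 0.
Proof. by move=> tc; apply/max_idPr; rewrite subr_le0. Qed.

Lemma continuous_ramp c : continuous (ramp c).
Proof.
move=> x; apply: (@continuous_max _ _ (fun t => t - c) (cst 0)); last exact: cvg_cst.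
by apply: continuousB => //; exact: cvg_cst.
Qed.

Lemma is_derive_ramp c x : x != c -> is_derive x 1 (ramp c) (heaviside c x).
Proof.
rewrite neq_lt /heaviside => /orP[xc|cx].
  rewrite leNgt xc; apply: (@near_eq_is_derive _ _ _ (cst 0)) => //.
  by near=> t; rewrite ramp_le // ltW //; near: t; exact: lt_nbhsl.
rewrite ltW //; apply: (@near_eq_is_derive _ _ _ (fun t => t - c)).
  by near=> t; rewrite ramp_ge // ltW //; near: t; exact: lt_nbhsr.
exact: is_derive_shift.
Unshelve. all: by end_near.
Qed.

Lemma ramp_heaviside c x : ramp c x * heaviside c x = ramp c x.
Proof. by rewrite /heaviside; case: leP => [_|/ltW/ramp_le ->]; rewrite ?mulr1 ?mulr0. Qed.

Lemma is_derive_half_sq_ramp c x : is_derive x 1 (half_sq_ramp c) (ramp c x).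
Proof.
have [->|xc] := eqVneq x c.
  rewrite /ramp subrr maxxx; apply: is_derive_sq_flat.
    by rewrite /half_sq_ramp /ramp subrr maxxx expr0n mul0r.
  move=> t; rewrite /half_sq_ramp; have [ct|tc] := leP c t.
    rewrite ramp_ge // [`|t - c|]ger0_norm ?subr_ge0 // ger0_norm ?divr_ge0 ?sqr_ge0 //.
    by have := sqr_ge0 (t - c); lra.
  by rewrite ramp_le ?expr0n ?mul0r ?normr0 ?sqr_ge0 // ltW.
have D := is_deriveZ (2^-1) (is_deriveX 2 (is_derive_ramp xc)).
apply: is_derive_eq; first apply: (near_eq_is_derive _ D).
  by near=> t; rewrite /half_sq_ramp /= mulrC.
by rewrite /= expr1 scalerA mulrA mulVf ?pnatr_eq0 // mul1r [_ *: _]ramp_heaviside.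
Unshelve. all: by end_near.
Qed.

End Ramp.

Section BangBangProfile.
Context {R : realType}.
Implicit Types s t T : R.

Definition bb_pos T s t :=
  half_sq_ramp s t - 2 * half_sq_ramp (s + T) t + half_sq_ramp (s + T + T) t.
Definition bb_vel T s t := ramp s t - 2 * ramp (s + T) t + ramp (s + T + T) t.
Definition bb_acc T s t :=
  heaviside s t - 2 * heaviside (s + T) t + heaviside (s + T + T) t.

Lemma is_derive_bb_pos T s t : is_derive t 1 (bb_pos T s) (bb_vel T s t).
Proof.
have D (c : R) := is_derive_half_sq_ramp c t.
exact: is_deriveD (is_deriveB (D s) (is_deriveZ 2 (D (s + T)))) (D (s + T + T)).
Qed.

Lemma is_derive_bb_vel T s t :
  t != s -> t != s + T -> t != s + T + T -> is_derive t 1 (bb_vel T s) (bb_acc T s t).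
Proof.
move=> ts1 ts2 ts3.
exact: is_deriveD (is_deriveB (is_derive_ramp ts1) (is_deriveZ 2 (is_derive_ramp ts2)))
  (is_derive_ramp ts3).
Qed.

Lemma continuous_bb_vel T s : continuous (bb_vel T s).
Proof.
move=> x; have r_cont c := @continuous_ramp R c x.
exact: (continuousD (continuousB (r_cont s) (continuousM (cvg_cst (2 : R)) (r_cont (s + T))))
  (r_cont (s + T + T))).
Qed.

Lemma bb_pos_le T s t : 0 <= T -> t <= s -> bb_pos T s t = 0.
Proof. by move=> T0 ts; rewrite /bb_pos /half_sq_ramp !ramp_le; lra. Qed.

Lemma bb_vel_le T s t : 0 <= T -> t <= s -> bb_vel T s t = 0.
Proof. by move=> T0 ts; rewrite /bb_vel !ramp_le; lra. Qed.

Lemma bb_acc_lt T s t : 0 <= T -> t < s -> bb_acc T s t = 0.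
Proof. by move=> T0 ts; rewrite /bb_acc /heaviside !ifN; lra. Qed.

Lemma bb_pos_ge T s t : 0 <= T -> s + T + T <= t -> bb_pos T s t = T ^+ 2.
Proof. by move=> T0 ts; rewrite /bb_pos /half_sq_ramp !ramp_ge; lra. Qed.

Lemma bb_vel_ge T s t : 0 <= T -> s + T + T <= t -> bb_vel T s t = 0.
Proof. by move=> T0 ts; rewrite /bb_vel !ramp_ge; lra. Qed.

Lemma bb_pos_bound T s t : 0 <= T -> 0 <= bb_pos T s t <= T ^+ 2.
Proof.
move=> T0; rewrite /bb_pos /half_sq_ramp.
have [ts|st] := leP t s; first by rewrite !ramp_le; nra.
have [tsT|sTt] := leP t (s + T).
  by rewrite (ramp_ge (ltW st)) !ramp_le //; nra.
have [tsTT|sTTt] := leP t (s + T + T).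
  by rewrite (ramp_le tsTT) !ramp_ge; nra.
by rewrite !ramp_ge; nra.
Qed.

Lemma bb_accE T s t : 0 <= T -> s <= t ->
  bb_acc T s t = if t - s < T then 1 else if t - s - T < T then -1 else 0.
Proof.
move=> T0 st; rewrite /bb_acc /heaviside.
by do ![case: ifP => ?]; lra.
Qed.

End BangBangProfile.

Section EdgeControl.
Variables (R : realType) (n : nat).
Implicit Types (q : 'rV[R]_n) (v : 'rV[R]_n).

Definition edge_dir q q' := (enorm (q' - q))^-1 *: (q' - q).
Definition edge_scale q q' := \big[Num.max/0]_(i < n) `|edge_dir q q' 0 i|.
Definition edge_accel q q' := (edge_scale q q')^-1 *: edge_dir q q'.
Definition edge_time q q' := Num.sqrt (edge_scale q q' * enorm (q' - q)).

Lemma enorm_ge0 v : 0 <= enorm v.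
Proof. exact: sqrtr_ge0. Qed.

Lemma enorm_eq0 v : (enorm v == 0) = (v == 0).
Proof.
rewrite /enorm sqrtr_eq0 le_eqVlt ltNge sumr_ge0 ?orbF => [|i _]; last exact: sqr_ge0.
rewrite psumr_eq0 => [|i _]; last exact: sqr_ge0.
apply/allP/eqP => [v0|-> i _]; last by rewrite /= mxE expr0n.
by apply/rowP => i; rewrite mxE; apply/eqP; rewrite -sqrf_eq0; exact: v0 (mem_index_enum i).
Qed.

Lemma edge_time_ge0 q q' : 0 <= edge_time q q'.
Proof. exact: sqrtr_ge0. Qed.

Lemma edge_scale_ge0 q q' : 0 <= edge_scale q q'.
Proof. exact: bigmax_ge_id. Qed.

Lemma edge_scale_gt0 q q' : q' != q -> 0 < edge_scale q q'.
Proof.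
move=> qq'; have e0 : enorm (q' - q) != 0 by rewrite enorm_eq0 subr_eq0.
rewrite lt_def edge_scale_ge0 andbT; apply: contra qq' => /eqP s0.
have dir0 : edge_dir q q' = 0.
  apply/rowP => i; rewrite [RHS]mxE; apply: normr0_eq0; apply: le_anti.
  by rewrite normr_ge0 andbT -s0; exact: le_bigmax.
by rewrite -subr_eq0 -(scalerKV e0 (q' - q)) -/(edge_dir q q') dir0 scaler0.
Qed.

Lemma edge_accel_bound q q' i : -1 <= edge_accel q q' 0 i <= 1.
Proof.
rewrite -ler_norml /edge_accel mxE normrM.
have [->|qq'] := eqVneq q' q.
  by rewrite /edge_dir subrr scaler0 mxE normr0 mulr0.
have s_gt0 := edge_scale_gt0 qq'.
rewrite gtr0_norm ?invr_gt0 // mulrC ler_pdivrMr // mul1r.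
exact: le_bigmax.
Qed.

Lemma edge_time_sq_accel q q' : edge_time q q' ^+ 2 *: edge_accel q q' = q' - q.
Proof.
have [->|qq'] := eqVneq q' q; first by rewrite /edge_accel /edge_dir subrr !scaler0.
have e0 : enorm (q' - q) != 0 by rewrite enorm_eq0 subr_eq0.
have s0 : edge_scale q q' != 0 by rewrite gt_eqF ?edge_scale_gt0.
rewrite sqr_sqrtr ?mulr_ge0 ?edge_scale_ge0 ?enorm_ge0 //.
by rewrite /edge_accel /edge_dir mulrC -scalerA !scalerKV.
Qed.

Lemma edge_accel_segment q q' p : 0 <= p <= edge_time q q' ^+ 2 ->
  exists2 l : R, 0 <= l <= 1 & q + p *: edge_accel q q' = (1 - l) *: q + l *: q'.
Proof.
move=> /andP[p0 pT]; have [T0|T0] := eqVneq (edge_time q q') 0.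
  have -> : p = 0 by apply: le_anti; rewrite p0 andbT (le_trans pT) // T0 expr0n.
  by exists 0; rewrite ?lexx ?ler01 // !scale0r !addr0 subr0 scale1r.
have T2 : 0 < edge_time q q' ^+ 2 by rewrite exprn_gt0 // lt_def T0 edge_time_ge0.
exists (p / edge_time q q' ^+ 2); first by rewrite divr_ge0 ?(ltW T2) //= ler_pdivrMr // mul1r.
rewrite -{1}[p](divfK (lt0r_neq0 T2)) -scalerA edge_time_sq_accel.
by rewrite scalerBr scalerBl scale1r addrA addrAC.
Qed.

End EdgeControl.

Section Superposition.
Variables (R : realType) (n : nat).
Implicit Types (q : 'rV[R]_n) (vs : seq 'rV[R]_n) (s t : R).

(* The edges of q :: vs run back to back from time s; an edge of half-duration
   T started at time s' contributes [f T s' t] times its acceleration vector. *)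
Fixpoint superpose (f : R -> R -> R -> R) q vs s t : 'rV[R]_n :=
  if vs is q' :: vs' then
    f (edge_time q q') s t *: edge_accel q q' +
    superpose f q' vs' (s + edge_time q q' + edge_time q q') t
  else 0.

Lemma duration_bang_bang_cons q q' vs : duration (bang_bang q (q' :: vs)) =
  edge_time q q' + (edge_time q q' + duration (bang_bang q' vs)).
Proof. by rewrite /duration /= !big_cons. Qed.

Lemma duration_bang_bang_ge0 q vs : 0 <= duration (bang_bang q vs).
Proof.
elim: vs q => [|q' vs IH] q; first by rewrite /duration big_nil.
by rewrite duration_bang_bang_cons !addr_ge0 ?edge_time_ge0.
Qed.

Lemma superpose_eq0 f q vs s t :
  (forall T s', 0 <= T -> s <= s' -> f T s' t = 0) -> superpose f q vs s t = 0.
Proof.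
elim: vs q s => [|q' vs IH] q s f0 //=.
have T0 := edge_time_ge0 q q'.
rewrite f0 // scale0r add0r IH // => T s' T'0 ss'; apply: f0 => //; lra.
Qed.

Lemma ctrl_at_bang_bang_cons q q' vs t :
  ctrl_at (bang_bang q (q' :: vs)) t =
  if t < edge_time q q' then edge_accel q q'
  else if t - edge_time q q' < edge_time q q' then - edge_accel q q'
  else ctrl_at (bang_bang q' vs) (t - edge_time q q' - edge_time q q').
Proof. by []. Qed.

Lemma superpose_bb_acc q vs s t :
  s <= t -> superpose bb_acc q vs s t = ctrl_at (bang_bang q vs) (t - s).
Proof.
elim: vs q s => [|q' vs IH] q s st //.
rewrite ctrl_at_bang_bang_cons /= bb_accE ?edge_time_ge0 //.
have T0 := edge_time_ge0 q q'.
have [lt1|ge1] := ltP (t - s) (edge_time q q').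
  by rewrite scale1r superpose_eq0 ?addr0 // => T s' T'0 ss'; apply: bb_acc_lt => //; lra.
have [lt2|ge2] := ltP (t - s - edge_time q q') (edge_time q q').
  by rewrite scaleN1r superpose_eq0 ?addr0 // => T s' T'0 ss'; apply: bb_acc_lt => //; lra.
by rewrite scale0r add0r IH; [congr ctrl_at; lra | lra].
Qed.

Lemma superpose_bb_pos_end q vs s t : s + duration (bang_bang q vs) <= t ->
  superpose bb_pos q vs s t = last q vs - q.
Proof.
elim: vs q s => [|q' vs IH] q s /=; first by rewrite subrr.
rewrite duration_bang_bang_cons => st.
have T0 := edge_time_ge0 q q'; have D0 := duration_bang_bang_ge0 q' vs.
rewrite bb_pos_ge ?edge_time_sq_accel; last lra; last by [].
by rewrite IH; [rewrite addrC subrKA | lra].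
Qed.

Lemma superpose_bb_vel_end q vs s t : s + duration (bang_bang q vs) <= t ->
  superpose bb_vel q vs s t = 0.
Proof.
elim: vs q s => [|q' vs IH] q s //=.
rewrite duration_bang_bang_cons => st.
have T0 := edge_time_ge0 q q'; have D0 := duration_bang_bang_ge0 q' vs.
by rewrite bb_vel_ge // ?scale0r ?add0r; [apply: IH | ]; lra.
Qed.

Lemma is_derive_superpose_bb_pos q vs s t :
  is_derive t 1 (superpose bb_pos q vs s) (superpose bb_vel q vs s t).
Proof.
elim: vs q s => [|q' vs IH] q s /=; first exact: is_derive_cst.
exact: is_deriveD (is_deriveZl _ (is_derive_bb_pos _ _ _)) (IH _ _).
Qed.

Lemma switch_times_bang_bang_cons q q' vs s :
  switch_times (bang_bang q (q' :: vs)) s =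
  s + edge_time q q' :: s + edge_time q q' + edge_time q q' ::
  switch_times (bang_bang q' vs) (s + edge_time q q' + edge_time q q').
Proof. by []. Qed.

Lemma is_derive_superpose_bb_vel q vs s t :
  t != s -> t \notin switch_times (bang_bang q vs) s ->
  is_derive t 1 (superpose bb_vel q vs s) (superpose bb_acc q vs s t).
Proof.
elim: vs q s => [|q' vs IH] q s ts; first by move=> _; exact: is_derive_cst.
rewrite switch_times_bang_bang_cons !inE negb_or => /andP[ts1 /norP[ts2 ts3]] /=.
exact: is_deriveD (is_deriveZl _ (is_derive_bb_vel ts ts1 ts2)) (IH _ _ ts2 ts3).
Qed.

Lemma continuous_superpose_bb_vel q vs s : continuous (superpose bb_vel q vs s).
Proof.
elim: vs q s => [|q' vs IH] q s x /=; first exact: cvg_cst.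
have vel_cont :=
  continuousZr_tmp (a := edge_accel q q') (@continuous_bb_vel _ (edge_time q q') s x).
exact: (continuousD vel_cont (IH q' _ x)).
Qed.

Lemma superpose_bb_pos_in (C : set 'rV[R]_n) q vs s t :
  C q -> segments_in C q vs -> C (q + superpose bb_pos q vs s t).
Proof.
elim: vs q s => [|q' vs IH] q s Cq /=; first by rewrite addr0.
move=> [seg segs]; have T0 := edge_time_ge0 q q'.
have [tle|tgt] := leP t (s + edge_time q q' + edge_time q q').
  rewrite superpose_eq0 ?addr0 => [|T s' T'0 ss']; last by apply: bb_pos_le => //; lra.
  by have [l l01 ->] := edge_accel_segment (bb_pos_bound s t T0); exact: seg.
have Cq' : C q'.
  by have := seg 1; rewrite subrr scale0r add0r scale1r; apply; rewrite ler01 lexx.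
rewrite bb_pos_ge ?edge_time_sq_accel //; last exact: ltW.
by rewrite addrA [q + _]addrC subrK; exact: IH.
Qed.

Lemma ctrl_at_bang_bang_bound q vs t i : -1 <= ctrl_at (bang_bang q vs) t 0 i <= 1.
Proof.
elim: vs q t => [|q' vs IH] q t; first by rewrite /= mxE; lra.
rewrite ctrl_at_bang_bang_cons; case: ifP => _; first exact: edge_accel_bound.
case: ifP => _; last exact: IH.
by rewrite mxE; have := edge_accel_bound q q' i; lra.
Qed.

End Superposition.

Theorem proposition6 (R : realType) (n : nat) (Cfree : set 'rV[R]_n)
    (qI qG : 'rV[R]_n) (vs : seq 'rV[R]_n) :
  open Cfree -> Cfree qI -> Cfree qG ->
  last qI vs = qG -> segments_in Cfree qI vs ->
  let u := bang_bang qI vs in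
  let tF := duration u in
  (forall t, 0 <= t <= tF -> forall i, -1 <= ctrl_at u t 0 i <= 1) /\
  exists q p : R -> 'rV[R]_n,
    [/\ DI_trajectory u qI 0 q p,
        (forall t, 0 <= t <= tF -> Cfree (q t)),
        q tF = qG & p tF = 0].
Proof.
move=> _ CqI _ last_vs seg u tF.
split=> [t _ i|]; first exact: ctrl_at_bang_bang_bound.
pose q t := qI + superpose bb_pos qI vs 0 t.
pose p := superpose bb_vel qI vs 0.
have dq (t : R) : is_derive t 1 q (p t).
  apply: is_derive_eq; last exact: add0r.
  exact: is_deriveD (is_derive_cst qI t 1) (is_derive_superpose_bb_pos qI vs 0 t).
exists q, p; split.
- split.
  + by split; rewrite /q /p superpose_eq0 ?addr0 // => T s' T0 s'0;
      [exact: bb_pos_le | exact: bb_vel_le].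
  + by apply: derivable_within_continuous => x _; case: (dq x).
  + by apply: continuous_subspaceT; exact: continuous_superpose_bb_vel.
  + by move=> t _; exact: dq.
  + move=> t /andP[t0 _] tsw; have := is_derive_superpose_bb_vel (lt0r_neq0 t0) tsw.
    by rewrite superpose_bb_acc ?subr0 // ltW.
- by move=> t _; exact: superpose_bb_pos_in.
- by rewrite /q superpose_bb_pos_end ?add0r // last_vs addrC subrK.
- by rewrite /p superpose_bb_vel_end ?add0r.
Qed.
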